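(* Let $M$ be a partial multiplication matrix whose row-column graph has at least one cycle, and let $\pi^\natural$ be a gridded $M$-coil defined on a cycle of $G_M$ of length $\ell$. Let $\pi^\#$ be any other $M$-gridding of the underlying permutation $\pi$, and let $c_1,\dots,c_r$ be the non-empty cells of $\pi^\#$ that lie in some single row of cells, or in some single column of cells. If cell $c_i$ contains $k_i$ points ($1\le i\le r$) and $S_i=\sum_{j\ne i}k_j$, then $k_i\le 2\ell(S_i+1)$ for each $i$.
   Context: A gridding matrix has entries in $\{0,1,-1\}$; an $m\times n$ one has $m$ columns, $n$ rows, $M_{ij}$ in column $i$ from the left and row $j$ from the bottom. An $M$-gridding of a permutation $\pi$ of length $L$ is a choice of vertical lines $\tfrac12=v_0\le\dots\le v_m=L+\tfrac12$ and horizontal lines $\tfrac12=h_0\le\dots\le h_n=L+\tfrac12$, not through points of $\pi$, such that in each cell $C_{ij}=\{v_{i-1}<x<v_i,\ h_{j-1}<y<h_j\}$ the points of $\pi$ are absent if $M_{ij}=0$, increasing if $M_{ij}=1$, decreasing if $M_{ij}=-1$; this gives an $M$-gridded permutation. The row-column graph $G_M$ is the bipartite graph on $\{1,\dots,m\}\cup\{1',\dots,n'\}$ with edge $ij'$ iff $M_{ij}\neq0$ (so non-zero cells correspond to edges). $M$ is a partial multiplication matrix if there are fixed $c_1,\dots,c_m,r_1,\dots,r_n\in\{\pm1\}$ with $M_{ij}=c_ir_j$ for each non-zero entry. Column $i$ is oriented left-to-right if $c_i=1$, right-to-left otherwise; row $j$ bottom-to-top if $r_j=1$, top-to-bottom otherwise.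 The orientation digraph $D_{\pi^\#}$ of an $M$-gridded permutation has its points as vertices, with $x\to y$ whenever $x,y$ lie in a common column of cells and $x$ precedes $y$ in that column's orientation, or in a common row of cells and $x$ precedes $y$ in that row's orientation. A gridded $M$-coil on a cycle of $G_M$ of length $\ell$ is an $M$-gridded permutation of length $n>\ell$ with an ordering $v_1,\dots,v_n$ of its points and a labelling by $1,\dots,\ell$ of the $\ell$ cells corresponding to the edges of that cycle such that (C1) $v_i$ lies in cell $i\bmod\ell$ (residues in $\{1,\dots,\ell\}$); (C2) $v_{i-1}\to v_i$ for $1<i\le n$; (C3) $v_i\to v_{i-\ell-1}$ for $\ell+1<i\le n$; (C4) $v_{\ell+1}\to v_1$. *)

(* Conventions (0-based):
   - a permutation pi of length L is a {perm 'I_L}; point x : 'I_L stands for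
     the paper's point (x+1, pi(x)+1).
   - an m x n gridding matrix is M : 'I_m -> 'I_n -> int; M i j is the cell in
     column i (from the left) and row j (from the bottom), 0-based.
   - gridlines are v h : nat -> nat; the paper's line v_k is v k - 1/2, so
     column i consists of x with v i <= x < v i.+1, similarly rows with h. *)
From mathcomp Require Import all_boot all_fingroup all_algebra.
Set Implicit Arguments. Unset Strict Implicit. Unset Printing Implicit Defensive.

Local Open Scope ring_scope.

Definition gridding_matrix (m n : nat) (M : 'I_m -> 'I_n -> int) : Prop :=
  forall i j, M i j = 0 \/ M i j = 1 \/ M i j = -1.

Definition pmm (m n : nat) (M : 'I_m -> 'I_n -> int)
    (c : 'I_m -> int) (r : 'I_n -> int) : Prop :=
  (forall i, c i = 1 \/ c i = -1) /\ (forall j, r j = 1 \/ r j = -1) /\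
  (forall i j, M i j != 0 -> M i j = c i * r j).

(* the cycle a_0 b_0' a_1 b_1' ... a_{p-1} b_{p-1}' a_0 in G_M (p >= 2) *)
Definition is_cycle (m n : nat) (M : 'I_m -> 'I_n -> int) (p : nat)
    (a : 'I_p -> 'I_m) (b : 'I_p -> 'I_n) : Prop :=
  (2 <= p)%N /\ injective a /\ injective b /\
  (forall k, M (a k) (b k) != 0 /\ M (a (ordS k)) (b k) != 0).

Definition cycle_edge (m n p : nat) (a : 'I_p -> 'I_m) (b : 'I_p -> 'I_n)
    (e : 'I_m * 'I_n) : Prop :=
  exists k, e = (a k, b k) \/ e = (a (ordS k), b k).

Definition has_cycle (m n : nat) (M : 'I_m -> 'I_n -> int) : Prop :=
  exists p (a : 'I_p -> 'I_m) (b : 'I_p -> 'I_n), is_cycle M a b.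

Definition in_line (m : nat) (v : nat -> nat) (i : 'I_m) (x : nat) : bool :=
  (v i <= x < v i.+1)%N.

Definition in_cell (m n L : nat) (pi : {perm 'I_L}) (v h : nat -> nat)
    (x : 'I_L) (i : 'I_m) (j : 'I_n) : bool :=
  in_line v i x && in_line h j (pi x).

Definition gridding (m n : nat) (M : 'I_m -> 'I_n -> int) (L : nat)
    (pi : {perm 'I_L}) (v h : nat -> nat) : Prop :=
  v 0%N = 0%N /\ v m = L /\ (forall k, (k < m)%N -> (v k <= v k.+1)%N) /\
  h 0%N = 0%N /\ h n = L /\ (forall k, (k < n)%N -> (h k <= h k.+1)%N) /\
  (forall i j x, in_cell pi v h x i j -> M i j != 0) /\
  (forall i j (x y : 'I_L), in_cell pi v h x i j -> in_cell pi v h y i j ->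
      (x < y)%N ->
      (M i j = 1 -> (pi x < pi y)%N) /\ (M i j = -1 -> (pi y < pi x)%N)).

Definition arrow (m n L : nat) (c : 'I_m -> int) (r : 'I_n -> int)
    (pi : {perm 'I_L}) (v h : nat -> nat) (x y : 'I_L) : Prop :=
  (exists i : 'I_m, in_line v i x /\ in_line v i y /\
      (if c i == 1 then (x < y)%N else (y < x)%N)) \/
  (exists j : 'I_n, in_line h j (pi x) /\ in_line h j (pi y) /\
      (if r j == 1 then (pi x < pi y)%N else (pi y < pi x)%N)).

(* (pi, v, h) is a gridded M-coil on a cycle of G_M of length l.
   The ordering v_1..v_L of the points is s |-> sigma (s-1); the labelling
   of cells by 1..l is t |-> lab (t-1). *)
Definition gridded_coil (m n : nat) (M : 'I_m -> 'I_n -> int)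
    (c : 'I_m -> int) (r : 'I_n -> int) (L : nat) (pi : {perm 'I_L})
    (v h : nat -> nat) (l : nat) : Prop :=
  gridding M pi v h /\ (l < L)%N /\
  exists p (a : 'I_p -> 'I_m) (b : 'I_p -> 'I_n),
    is_cycle M a b /\ l = (2 * p)%N /\
    exists (lab : nat -> 'I_m * 'I_n),
      (forall t1 t2, (t1 < l)%N -> (t2 < l)%N -> lab t1 = lab t2 -> t1 = t2) /\
      (forall t, (t < l)%N -> cycle_edge a b (lab t)) /\
      (forall e, cycle_edge a b e -> exists2 t, (t < l)%N & lab t = e) /\
      exists sigma : {perm 'I_L},
        (forall s : 'I_L, in_cell pi v h (sigma s) (lab (s %% l)%N).1 (lab (s %% l)%N).2) /\
        (forall s t : 'I_L, t = s.+1 :> nat -> arrow c r pi v h (sigma s) (sigma t)) /\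
        (forall s t : 'I_L, s = (t + l.+1)%N :> nat ->
            arrow c r pi v h (sigma s) (sigma t)) /\
        (forall s t : 'I_L, s = l :> nat -> t = 0%N :> nat ->
            arrow c r pi v h (sigma s) (sigma t)).

Definition cell_count (m n L : nat) (pi : {perm 'I_L}) (v h : nat -> nat)
    (i : 'I_m) (j : 'I_n) : nat :=
  #|[set x : 'I_L | in_cell pi v h x i j]|.

(* Write w_s for the points of the coil in coil order and C(s) for the cell of the coil
   gridding containing w_s.  Inside a cell the orientations of its column and of its row
   agree, and the successive returns w_s, w_(s+l), w_(s+2l), ... of the coil to a cell move
   strictly backwards in that orientation.  Between the returns w_(s+l) and w_s, and between
   w_s and w_(s-l), the coil makes the detours w_(s+l) -> w_(s-1) -> w_s and
   w_s -> w_(s+1) -> w_(s-l) out of C(s); as C(s-1), C(s), C(s+1) are three edges of a cycle of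
   G_M, one detour stays in the column of C(s) and the other in its row.
   Now let Q be a cell of another M-gridding.  If three points of Q visit the same coil cell,
   the row detour between the outer two is vertically strictly between them and outside the
   column of the coil cell; by the monotonicity of Q it is not in Q, so it is a point of the
   row of Q outside Q (and symmetrically for columns).  Hence at most two points of Q share
   both their coil cell and the number of such points below them, giving k <= 2 l (S + 1). *)

From Pilot Require Import Defs.
From mathcomp Require Import all_boot all_fingroup all_algebra.
From mathcomp Require Import zify.
Set Implicit Arguments. Unset Strict Implicit. Unset Printing Implicit Defensive.
Import GRing.Theory.

Definition precedes (s : int) (x y : nat) : bool := if s == 1%R then x < y else y < x.
Definition preceq (s : int) (x y : nat) : bool := if s == 1%R then x <= y else y <= x.
Definition strictly_between (x y z : nat) : bool := (x < y < z) || (z < y < x).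

Lemma precedes_trans s x y z : precedes s x y -> precedes s y z -> precedes s x z.
Proof. by rewrite /precedes; case: ifP => _; lia. Qed.

Lemma precedesW s x y : precedes s x y -> preceq s x y.
Proof. by rewrite /precedes /preceq; case: ifP => _; lia. Qed.

Lemma precedesN s x y : s = 1%R \/ s = (-1)%R -> precedes (- s) x y = precedes s y x.
Proof. by case=> ->. Qed.

Lemma preceq_between s x x' y z z' :
  preceq s x' x -> precedes s x y -> precedes s y z -> preceq s z z' ->
  strictly_between x' y z'.
Proof. by rewrite /precedes /preceq /strictly_between; case: ifP => _; lia. Qed.

Lemma strictly_betweenE s x y z : s = 1%R \/ s = (-1)%R ->
  strictly_between x y z =
    precedes s x y && precedes s y z || precedes s z y && precedes s y x.
Proof.
rewrite /strictly_between /precedes => -[] -> //=.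
by rewrite orbC; congr (_ || _); apply: andbC.
Qed.

Lemma addn_mod_neq l s d : 0 < d < l -> (s + d) %% l != s %% l.
Proof.
move=> /andP[d0 dl]; rewrite -[X in _ != X %% l]addn0 eqn_modDl mod0n modn_small //.
by rewrite -lt0n.
Qed.

Lemma mod_gap l s s' : s < s' -> s = s' %[mod l] -> s + l <= s'.
Proof.
move=> ss' /esym/eqP; rewrite eqn_mod_dvd ?(ltnW ss') // => /dvdn_leq.
by rewrite subn_gt0 ss' leq_subRL ?(ltnW ss') // addnC; apply.
Qed.

Lemma card_fibers (T Y : finType) (A : {set T}) (g : T -> Y) :
  #|A| = \sum_(y : Y) #|[set x in A | g x == y]|.
Proof.
rewrite -sum1_card (partition_big g xpredT) //; apply: eq_bigr => y _.
by rewrite -sum1_card; apply: eq_bigl => x; rewrite inE.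
Qed.

Lemma card_bigcup_le (I T : finType) (P : pred I) (F : I -> {set T}) :
  #|\bigcup_(i | P i) F i| <= \sum_(i | P i) #|F i|.
Proof.
elim/big_rec2: _ => [|i n U _ le]; first by rewrite cards0.
by rewrite (leq_trans (leq_card_setU _ _).1) ?leq_add2l.
Qed.

Lemma increasing_triple (T : finType) (idx : T -> nat) (F : {set T}) :
  injective idx -> 2 < #|F| ->
  exists q1 q2 q3, [/\ q1 \in F, q2 \in F, q3 \in F & idx q1 < idx q2 < idx q3].
Proof.
move=> idx_inj F3; have [x xF] : exists x, x \in F by apply/set0Pn; rewrite -card_gt0; lia.
case: (arg_minnP idx xF) => q1 q1F min1; case: (arg_maxnP idx xF) => q3 q3F max3.
have : 0 < #|F :\ q1 :\ q3|.
  by move: F3; rewrite (cardsD1 q1) (cardsD1 q3 (F :\ q1)); do 2 case: (_ \in _); lia.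
case/card_gt0P => q2; rewrite !inE => /and3P[q23 q21 q2F].
exists q1, q2, q3; split=> //; have /= := max3 _ q2F.
by rewrite !ltn_neqAle (min1 _ q2F) !(inj_eq idx_inj) eq_sym q21 q23 => ->.
Qed.

Lemma card_le_separated (T R : finType) (Q O : {set T}) (key idx : T -> nat) (res : T -> R) :
  injective idx ->
  (forall q1 q3 y, q1 \in Q -> q3 \in Q -> key q1 < key y < key q3 -> y \in Q :|: O) ->
  (forall q1 q2 q3, q1 \in Q -> q2 \in Q -> q3 \in Q -> idx q1 < idx q2 < idx q3 ->
     res q1 = res q2 -> res q3 = res q2 ->
     exists2 y, y \notin Q & strictly_between (key q3) (key y) (key q1)) ->
  #|Q| <= 2 * #|R| * (#|O| + 1).
Proof.
move=> idx_inj convex separated.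
pose below q := #|[set o in O | key o < key q]|.
have below_le q : below q <= #|O| by apply/subset_leq_card/subsetP => o; rewrite inE => /andP[].
have below_lt q1 q3 y : q1 \in Q -> q3 \in Q -> y \notin Q -> key q1 < key y < key q3 ->
    below q1 < below q3.
  move=> q1Q q3Q yQ k13; have /setUP[|yO] := convex _ _ _ q1Q q3Q k13.
    by rewrite (negbTE yQ).
  move/andP: k13 => [k1 k3].
  apply/proper_card/properP; split.
    by apply/subsetP => o; rewrite !inE => /andP[-> ko]; lia.
  by exists y; rewrite !inE yO /= ?k3 // -leqNgt (ltnW k1).
(* Three points of Q in one fibre of [g] would straddle a point of O. *)
pose g q : 'I_#|O|.+1 * R := (inord (below q), res q).
have -> : 2 * #|R| * (#|O| + 1) = #|{: 'I_#|O|.+1 * R}| * 2 by rewrite card_prod card_ord; lia.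
rewrite (card_fibers Q g) -sum_nat_const.
apply: leq_sum => k _; rewrite leqNgt; apply/negP.
case/(increasing_triple idx_inj) => q1 [q2 [q3 []]]; rewrite !inE.
move=> /andP[q1Q /eqP g1] /andP[q2Q /eqP g2] /andP[q3Q /eqP g3] idx123.
move: g1 g3; rewrite -{}g2 => -[b1 r1] [b3 r3].
have [y yQ] := separated _ _ _ q1Q q2Q q3Q idx123 r1 r3.
have below_eq : below q1 = below q3.
  move: b1 b3 => /(congr1 (@nat_of_ord _)) + /(congr1 (@nat_of_ord _)).
  by rewrite !inordK ?ltnS // => -> ->.
by case/orP => /(below_lt _ _ _ _ _ yQ); [move/(_ q3Q q1Q) | move/(_ q1Q q3Q)];
  rewrite below_eq ltnn.
Qed.

Section Lines.
Variables (m : nat) (v : nat -> nat).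

Lemma in_line_between (i : 'I_m) x y z :
  in_line v i x -> in_line v i z -> strictly_between x y z -> in_line v i y.
Proof.
by rewrite /in_line /strictly_between => /andP[? ?] /andP[? ?] /orP[] /andP[? ?]; apply/andP; lia.
Qed.

Lemma in_line_exists L x : v 0 = 0 -> v m = L -> x < L -> exists i : 'I_m, in_line v i x.
Proof.
move=> v0 vm xL; have xm : x < v m by rewrite vm.
case: (ex_minnP (ex_intro (fun k => x < v k) m xm)) => -[|k] xk min_k.
  by rewrite v0 in xk.
have km : k < m by apply: min_k.
by exists (Ordinal km); rewrite /in_line /= xk andbT leqNgt; apply/negP => /min_k; rewrite ltnn.
Qed.

Hypothesis v_mono : forall k, k < m -> v k <= v k.+1.

Lemma in_line_inj (i i' : 'I_m) x : in_line v i x -> in_line v i' x -> i = i'.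
Proof.
have mono : {in [pred k | k <= m] &, {homo v : a b / a <= b}}.
  apply: homo_leq_in => // [a b c|a b|a _]; rewrite ?inE; first exact: leq_trans.
    by move=> _ bm k /andP[_ /ltnW]; move/leq_trans; apply.
  exact: v_mono.
have apart (k k' : 'I_m) : k < k' -> in_line v k x -> in_line v k' x -> False.
  move=> kk' /andP[_ xk] /andP[k'x _].
  by have := mono _ _ (ltn_ord k) (ltnW (ltn_ord k')) kk'; lia.
move=> xi xi'; case: (ltngtP i i') => [lt|lt|/val_inj //].
  by case: (apart _ _ lt xi xi').
by case: (apart _ _ lt xi' xi).
Qed.
End Lines.

Section Gridding.
Variables (m n : nat) (M : 'I_m -> 'I_n -> int) (c : 'I_m -> int) (r : 'I_n -> int).
Variables (L : nat) (pi : {perm 'I_L}) (v h : nat -> nat).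
Hypothesis pmmM : pmm M c r.
Hypothesis grid : gridding M pi v h.

Local Notation in_cell := (@in_cell m n L pi v h).
Local Notation arrow := (arrow c r pi v h).

Lemma in_cell_inj x i j i' j' : in_cell x i j -> in_cell x i' j' -> i = i' /\ j = j'.
Proof.
have [_ [_ [v_mono [_ [_ [h_mono _]]]]]] := grid.
move=> /andP[xi xj] /andP[xi' xj'].
by split; [apply: in_line_inj xi xi' | apply: in_line_inj xj xj'].
Qed.

Lemma cell_ltn x y i j : in_cell x i j -> in_cell y i j ->
  (x < y) = precedes (M i j) (pi x) (pi y).
Proof.
have [_ [_ [_ [_ [_ [_ [nz mon]]]]]]] := grid; have [c_sign [r_sign cr]] := pmmM.
move=> xij yij; have sign : M i j = 1%R \/ M i j = (-1)%R.
  by rewrite (cr _ _ (nz _ _ _ xij)); case: (c_sign i) (r_sign j) => -> [] ->; auto.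
have {}mon u w : in_cell u i j -> in_cell w i j -> u < w -> precedes (M i j) (pi u) (pi w).
  by move=> uij wij uw; have := mon _ _ _ _ uij wij uw; rewrite /precedes; case: sign => ->; tauto.
case: (ltngtP x y) => [xy|yx|/val_inj->]; first by rewrite mon.
  by move: (mon _ _ yij xij yx); rewrite /precedes; case: ifP => _; lia.
by rewrite /precedes ltnn; case: ifP.
Qed.

Lemma cell_precedes x y i j : in_cell x i j -> in_cell y i j ->
  precedes (c i) x y = precedes (r j) (pi x) (pi y).
Proof.
have [_ [_ [_ [_ [_ [_ [nz _]]]]]]] := grid; have [c_sign [r_sign cr]] := pmmM.
move=> xij yij; rewrite {1}/precedes !(cell_ltn xij yij, cell_ltn yij xij) cr ?(nz _ _ _ xij) //.
by case: (c_sign i) => ->; rewrite ?mul1r ?mulN1r //= precedesN.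
Qed.

Lemma cell_between x y z i j : in_cell x i j -> in_cell y i j -> in_cell z i j ->
  strictly_between x y z = strictly_between (pi x) (pi y) (pi z).
Proof.
have [c_sign [r_sign _]] := pmmM => xij yij zij.
rewrite (strictly_betweenE _ _ _ (c_sign i)) (strictly_betweenE _ _ _ (r_sign j)).
by rewrite !(cell_precedes xij, cell_precedes yij, cell_precedes zij).
Qed.

Lemma arrow_from_cell x y i j : in_cell x i j -> arrow x y ->
  in_line v i y /\ precedes (c i) x y \/ in_line h j (pi y) /\ precedes (r j) (pi x) (pi y).
Proof.
have [_ [_ [v_mono [_ [_ [h_mono _]]]]]] := grid.
move=> /andP[xi xj] [[i' [xi' [yi' xy]]] | [j' [xj' [yj' xy]]]].
  by left; rewrite (in_line_inj v_mono xi xi').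
by right; rewrite (in_line_inj h_mono xj xj').
Qed.

Lemma arrow_to_cell x y i j : in_cell y i j -> arrow x y ->
  in_line v i x /\ precedes (c i) x y \/ in_line h j (pi x) /\ precedes (r j) (pi x) (pi y).
Proof.
have [_ [_ [v_mono [_ [_ [h_mono _]]]]]] := grid.
move=> /andP[yi yj] [[i' [xi' [yi' xy]]] | [j' [xj' [yj' xy]]]].
  by left; rewrite (in_line_inj v_mono yi yi').
by right; rewrite (in_line_inj h_mono yj yj').
Qed.

Lemma arrow_in_cell x y i j : in_cell x i j -> in_cell y i j -> arrow x y ->
  precedes (c i) x y.
Proof. by move=> xij yij /(arrow_from_cell xij) [[]|[_]] //; rewrite (cell_precedes xij yij). Qed.

Definition detour (x y z : 'I_L) (i : 'I_m) (j : 'I_n) : Prop :=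
  [/\ in_line v i y, ~~ in_line h j (pi y), precedes (c i) x y & precedes (c i) y z] \/
  [/\ in_line h j (pi y), ~~ in_line v i y, precedes (r j) (pi x) (pi y)
    & precedes (r j) (pi y) (pi z)].

Lemma arrows_detour x y z i j :
  in_cell x i j -> in_cell z i j -> ~~ in_cell y i j -> arrow x y -> arrow y z ->
  detour x y z i j.
Proof.
rewrite /in_cell => xij zij yij /(arrow_from_cell xij) [] [y1 xy] /(arrow_to_cell zij) [] [y2 yz].
- by left; split=> //; move: yij; rewrite y1.
- by move: yij; rewrite y1 y2.
- by move: yij; rewrite y1 y2.
- by right; split=> //; move: yij; rewrite y1 andbT.
Qed.

Lemma detour_precedes x y z i j :
  in_cell x i j -> in_cell z i j -> detour x y z i j -> precedes (c i) x z.
Proof.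
move=> xij zij [] [_ _ xy yz]; first exact: precedes_trans xy yz.
by rewrite (cell_precedes xij zij); apply: precedes_trans xy yz.
Qed.
End Gridding.

Section CycleEdges.
Variables (m n p : nat) (a : 'I_p -> 'I_m) (b : 'I_p -> 'I_n).
Hypotheses (a_inj : injective a) (b_inj : injective b).

Definition cycle_cell (t : bool) (k : 'I_p) : 'I_m * 'I_n :=
  if t then (a k, b k) else (a (ordS k), b k).

Lemma cycle_edgeP e : cycle_edge a b e -> exists t k, e = cycle_cell t k.
Proof. by case=> k [] ->; [exists true | exists false]; exists k. Qed.

Lemma cycle_cell_line_inj t k k' :
  (cycle_cell t k).1 = (cycle_cell t k').1 \/ (cycle_cell t k).2 = (cycle_cell t k').2 ->
  k = k'.
Proof. by case: t => -[/a_inj|/b_inj] // /ordS_inj. Qed.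

Lemma cycle_edges_not_in_line e1 e2 e3 :
  cycle_edge a b e1 -> cycle_edge a b e2 -> cycle_edge a b e3 ->
  e1 <> e2 -> e2 <> e3 -> e1 <> e3 ->
  ~ (e1.1 = e2.1 /\ e2.1 = e3.1 \/ e1.2 = e2.2 /\ e2.2 = e3.2).
Proof.
move=> /cycle_edgeP[t1 [k1 ->]] /cycle_edgeP[t2 [k2 ->]] /cycle_edgeP[t3 [k3 ->]] n12 n23 n13 line.
have same_line t k k' : cycle_cell t k <> cycle_cell t k' ->
    ~ ((cycle_cell t k).1 = (cycle_cell t k').1 \/ (cycle_cell t k).2 = (cycle_cell t k').2).
  by move=> nkk' /cycle_cell_line_inj kk'; rewrite kk' in nkk'.
have [e|[e|e]] : t1 = t2 \/ t2 = t3 \/ t1 = t3 by destruct t1, t2, t3; auto.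
all: subst.
- by apply: (same_line _ _ _ n12); case: line => -[]; auto.
- by apply: (same_line _ _ _ n23); case: line => -[]; auto.
- by apply: (same_line _ _ _ n13); case: line => -[-> ->]; auto.
Qed.
End CycleEdges.

Section Coil.
Variables (m n : nat) (M : 'I_m -> 'I_n -> int) (c : 'I_m -> int) (r : 'I_n -> int).
Variables (L : nat) (pi : {perm 'I_L}) (v h : nat -> nat).
Hypothesis pmmM : pmm M c r.
Hypothesis grid : gridding M pi v h.
Variables (p : nat) (a : 'I_p -> 'I_m) (b : 'I_p -> 'I_n).
Hypotheses (a_inj : injective a) (b_inj : injective b).
Variables (l : nat) (lab : nat -> 'I_m * 'I_n) (w : nat -> 'I_L).
Hypothesis l_gt2 : 2 < l.
Hypothesis lab_inj : forall t1 t2, t1 < l -> t2 < l -> lab t1 = lab t2 -> t1 = t2.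
Hypothesis lab_edge : forall t, t < l -> cycle_edge a b (lab t).

Local Notation col s := (lab (s %% l)).1.
Local Notation row s := (lab (s %% l)).2.
Local Notation in_cell := (@in_cell m n L pi v h).
Local Notation arrow := (arrow c r pi v h).

(* [w s] is the point v_(s+1) of the coil and [lab t] the cell labelled t+1; the four
   hypotheses below are (C1)-(C4). *)
Hypothesis coil_in_cell : forall s, s < L -> in_cell (w s) (col s) (row s).
Hypothesis coil_next : forall s, s.+1 < L -> arrow (w s) (w s.+1).
Hypothesis coil_back : forall s, s + l.+1 < L -> arrow (w (s + l.+1)) (w s).
Hypothesis coil_back0 : arrow (w l) (w 0).

Let l_gt0 : 0 < l. Proof. exact: ltn_trans l_gt2. Qed.

Lemma lab_mod_inj s s' : lab (s %% l) = lab (s' %% l) -> s = s' %[mod l].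
Proof. exact: lab_inj (ltn_pmod _ l_gt0) (ltn_pmod _ l_gt0). Qed.

Lemma lab_addn_neq s d : 0 < d < l -> lab ((s + d) %% l) <> lab (s %% l).
Proof. by move=> dl /lab_mod_inj/eqP; apply/negP/addn_mod_neq. Qed.

Lemma coil_in_cell_mod s s' : s < L -> s = s' %[mod l] -> in_cell (w s) (col s') (row s').
Proof. by move=> sL <-; apply: coil_in_cell. Qed.

Lemma coil_not_in_cell s s' : s < L -> s != s' %[mod l] -> ~~ in_cell (w s) (col s') (row s').
Proof.
move=> sL ss'; apply/negP => /(in_cell_inj grid (coil_in_cell sL)) [].
move: ss' => /negP ss' e1 e2; apply/ss'/eqP/lab_mod_inj.
by move: e1 e2; case: (lab (s %% l)) => ? ?; case: (lab (s' %% l)) => ? ? /= -> ->.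
Qed.

Lemma coil_cells_not_in_line u :
  ~ (col u = col u.+1 /\ col u.+1 = col u.+2 \/ row u = row u.+1 /\ row u.+1 = row u.+2).
Proof.
have edge t : cycle_edge a b (lab (t %% l)) by apply/lab_edge/ltn_pmod.
apply: (cycle_edges_not_in_line a_inj b_inj (edge u) (edge u.+1) (edge u.+2)).
- by apply/nesym; rewrite -addn1; apply: lab_addn_neq; rewrite /= ltnW.
- by apply/nesym; rewrite -addn1; apply: lab_addn_neq; rewrite /= ltnW.
- by apply/nesym; rewrite -addn2; apply: lab_addn_neq; rewrite l_gt2.
Qed.

Lemma coil_detour_prev q : q + l.+1 < L ->
  detour c r pi v h (w (q + l.+1)) (w q) (w q.+1) (col q.+1) (row q.+1).
Proof.
move=> qL; apply: (arrows_detour grid _ _ _ (coil_back qL) (coil_next _)).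
- by apply: coil_in_cell_mod; rewrite // addnS -addSn modnDr.
- by apply: coil_in_cell; lia.
- by apply: coil_not_in_cell; [lia | rewrite eq_sym -addn1 addn_mod_neq //= ltnW].
- lia.
Qed.

Lemma coil_detour_next t : t + l.+1 < L ->
  detour c r pi v h (w (t + l)) (w (t + l.+1)) (w t) (col t) (row t).
Proof.
move=> tL; rewrite addnS in tL *; apply: (arrows_detour grid _ _ _ (coil_next tL)).
- by apply: coil_in_cell_mod; rewrite ?modnDr //; lia.
- by apply: coil_in_cell; lia.
- by apply: coil_not_in_cell => //; rewrite -addSn modnDr -addn1 addn_mod_neq //= ltnW.
- by rewrite -addnS; apply: coil_back; rewrite addnS.
Qed.

Lemma coil_step s : s + l < L -> precedes (c (col s)) (w (s + l)) (w s).
Proof.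
case: s => [|q] sL.
  rewrite add0n in sL *; apply: (arrow_in_cell pmmM grid _ _ coil_back0).
    by apply: coil_in_cell_mod; rewrite // modnn mod0n.
  by apply: coil_in_cell; apply: leq_ltn_trans sL.
rewrite addSnnS in sL *; apply: (detour_precedes pmmM grid _ _ (coil_detour_prev sL)).
- by apply: coil_in_cell_mod; rewrite // addnS -addSn modnDr.
- by apply: coil_in_cell; lia.
Qed.

Lemma coil_precedes s s' : s < s' < L -> s = s' %[mod l] ->
  precedes (c (col s)) (w s') (w s).
Proof.
elim/ltn_ind: s' => s' IH /andP[ss' s'L] es.
have gap := mod_gap ss' es.
have [t s'E] : exists t, s' = t + l.
  by exists (s' - l); rewrite subnK // (leq_trans (leq_addl s l)).
rewrite s'E modnDr in s'L es IH *; have step := coil_step s'L; rewrite -es in step.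
case: (ltngtP s t) => [st|ts|st].
- by apply: precedes_trans step (IH _ _ _ es); lia.
- by move: gap; rewrite s'E; lia.
- by subst t.
Qed.

Lemma coil_preceq s s' u : s <= s' < L -> s = u %[mod l] -> s' = u %[mod l] ->
  preceq (c (col u)) (w s') (w s) /\ preceq (r (row u)) (pi (w s')) (pi (w s)).
Proof.
case/andP; rewrite leq_eqVlt => /orP[/eqP<- _ _ _|ss' s'L <- /esym es].
  by rewrite /preceq !if_same !leqnn.
have sL : s < L by apply: ltn_trans s'L.
have prec := coil_precedes (introT andP (conj ss' s'L)) es.
split; apply: precedesW => //.
by rewrite -(cell_precedes pmmM grid (coil_in_cell_mod s'L (esym es)) (coil_in_cell sL)).
Qed.

Lemma coil_separates s1 s2 s3 : s1 < s2 < s3 -> s3 < L ->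
  s1 = s2 %[mod l] -> s3 = s2 %[mod l] ->
  (exists y : 'I_L, [/\ in_line v (col s2) y, ~~ in_line h (row s2) (pi y)
      & strictly_between (w s3) y (w s1)]) /\
  (exists y : 'I_L, [/\ in_line h (row s2) (pi y), ~~ in_line v (col s2) y
      & strictly_between (pi (w s3)) (pi y) (pi (w s1))]).
Proof.
move=> /andP[s12 s23] s3L e12 e32.
have [_ [_ [v_mono [_ [_ [h_mono _]]]]]] := grid.
have gap12 := mod_gap s12 e12; have gap23 := mod_gap s23 (esym e32).
have [t s2E] : exists t, s2 = t + l.
  by exists (s2 - l); rewrite subnK // (leq_trans (leq_addl _ _) gap12).
have [q s2E'] : exists q, s2 = q.+1 by exists s2.-1; rewrite prednK // (leq_ltn_trans _ s12).
have tL : t + l.+1 < L by lia.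
have qL : q + l.+1 < L by lia.
have [qL' s2L'] : q < L /\ s2.+1 < L by lia.
have [P1c P1r] := @coil_preceq s1 t s2 ltac:(lia) e12 ltac:(by rewrite s2E modnDr).
have [P2c P2r] := @coil_preceq s1 s2 s2 ltac:(lia) e12 erefl.
have [P3c P3r] := @coil_preceq s2 s3 s2 ltac:(lia) erefl e32.
have [P4c P4r] := @coil_preceq (s2 + l) s3 s2 ltac:(lia) (modnDr _ _) e32.
(* The detours through w_(s2-1) = w q and w_(s2+1) cannot both use the column (or both
   the row) of C(s2), since C(q), C(s2), C(s2+1) are distinct edges of a cycle. *)
have := coil_detour_next tL; have := coil_detour_prev qL.
have -> : t %% l = s2 %% l by rewrite s2E modnDr.
rewrite -addSnnS -s2E' addnS -s2E.
have [qv qh] := andP (coil_in_cell qL'); have [av ah] := andP (coil_in_cell s2L').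
move=> [] [yb_line yb_off yb1 yb2] [] [ya_line ya_off ya1 ya2].
- case: (coil_cells_not_in_line (u := q)); left; rewrite -s2E'.
  by rewrite (in_line_inj v_mono qv yb_line) (in_line_inj v_mono ya_line av).
- split; first by exists (w q); split=> //; apply: preceq_between P4c yb1 yb2 P2c.
  by exists (w s2.+1); split=> //; apply: preceq_between P3r ya1 ya2 P1r.
- split; first by exists (w s2.+1); split=> //; apply: preceq_between P3c ya1 ya2 P1c.
  by exists (w q); split=> //; apply: preceq_between P4r yb1 yb2 P2r.
- case: (coil_cells_not_in_line (u := q)); right; rewrite -s2E'.
  by rewrite (in_line_inj h_mono qh yb_line) (in_line_inj h_mono ya_line ah).
Qed.

Section OtherGridding.
Variables (v' h' : nat -> nat) (idx : 'I_L -> 'I_L).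
Hypothesis grid' : gridding M pi v' h'.
Hypothesis idxK : forall q, w (idx q) = q.

Local Notation in_cell' := (@Defs.in_cell m n L pi v' h').

Let idx_inj : injective (fun q => val (idx q)).
Proof. by move=> q q' /val_inj e; rewrite -(idxK q) -(idxK q') e. Qed.

Lemma coil_cell_separated (i : 'I_m) (j : 'I_n) q1 q2 q3 :
  in_cell' q1 i j -> in_cell' q3 i j -> idx q1 < idx q2 < idx q3 ->
  idx q1 = idx q2 %[mod l] -> idx q3 = idx q2 %[mod l] ->
  (exists2 y, ~~ in_cell' y i j & strictly_between q3 y q1) /\
  (exists2 y, ~~ in_cell' y i j & strictly_between (pi q3) (pi y) (pi q1)).
Proof.
move=> q1Q q3Q idx123 e12 e32.
have [[y [yv yh ybtw]] [z [zh zv zbtw]]] := coil_separates idx123 (ltn_ord _) e12 e32.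
rewrite !idxK in ybtw zbtw.
have /andP[q1v q1h] := coil_in_cell_mod (ltn_ord (idx q1)) e12; rewrite idxK in q1v q1h.
have /andP[q3v q3h] := coil_in_cell_mod (ltn_ord (idx q3)) e32; rewrite idxK in q3v q3h.
split.
  exists y => //; apply: contra yh => yQ; apply: in_line_between q3h q1h _.
  by rewrite -(cell_between pmmM grid' q3Q yQ q1Q).
exists z => //; apply: contra zv => zQ; apply: in_line_between q3v q1v _.
by rewrite (cell_between pmmM grid' q3Q zQ q1Q).
Qed.

Let residue (q : 'I_L) : 'I_l := Ordinal (ltn_pmod (idx q) l_gt0).

Let residue_eq q q' : residue q = residue q' -> idx q = idx q' %[mod l].
Proof. by move/(congr1 val). Qed.

Lemma cell_count_le_row (i : 'I_m) (j : 'I_n) :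
  cell_count pi v' h' i j <= 2 * l * (\sum_(i' | i' != i) cell_count pi v' h' i' j + 1).
Proof.
have [v0 [vm _]] := grid'.
set O := \bigcup_(i' | i' != i) [set x | in_cell' x i' j].
apply: leq_trans
  (card_le_separated (O := O) (key := fun x => pi x) (res := residue) idx_inj _ _) _.
- move=> q1 q3 y; rewrite !inE => /andP[_ q1h] /andP[_ q3h] btw.
  have yh : in_line h' j (pi y) by apply: in_line_between q1h q3h _; rewrite /strictly_between btw.
  have [i' yv] := in_line_exists v0 vm (ltn_ord y).
  case: (eqVneq i' i) => [<-|ne]; first by rewrite /Defs.in_cell yv yh.
  by apply/orP; right; apply/bigcupP; exists i' => //; rewrite inE /Defs.in_cell yv yh.
- move=> q1 q2 q3; rewrite !inE => q1Q _ q3Q idx123 /residue_eq e12 /residue_eq e32.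
  have [_ [y yQ btw]] := coil_cell_separated q1Q q3Q idx123 e12 e32.
  by exists y; rewrite ?inE.
- by rewrite card_ord leq_mul2l leq_add2r card_bigcup_le orbT.
Qed.

Lemma cell_count_le_col (i : 'I_m) (j : 'I_n) :
  cell_count pi v' h' i j <= 2 * l * (\sum_(j' | j' != j) cell_count pi v' h' i j' + 1).
Proof.
have [_ [_ [_ [h0 [hn _]]]]] := grid'.
set O := \bigcup_(j' | j' != j) [set x | in_cell' x i j'].
apply: leq_trans
  (card_le_separated (O := O) (key := fun x => val x) (res := residue) idx_inj _ _) _.
- move=> q1 q3 y; rewrite !inE => /andP[q1v _] /andP[q3v _] btw.
  have yv : in_line v' i y by apply: in_line_between q1v q3v _; rewrite /strictly_between btw.
  have [j' yh] := in_line_exists h0 hn (ltn_ord (pi y)).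
  case: (eqVneq j' j) => [<-|ne]; first by rewrite /Defs.in_cell yv yh.
  by apply/orP; right; apply/bigcupP; exists j' => //; rewrite inE /Defs.in_cell yv yh.
- move=> q1 q2 q3; rewrite !inE => q1Q _ q3Q idx123 /residue_eq e12 /residue_eq e32.
  have [[y yQ btw] _] := coil_cell_separated q1Q q3Q idx123 e12 e32.
  by exists y; rewrite ?inE.
- by rewrite card_ord leq_mul2l leq_add2r card_bigcup_le orbT.
Qed.
End OtherGridding.
End Coil.

Theorem proposition5p5 (m n : nat) (M : 'I_m -> 'I_n -> int)
    (c : 'I_m -> int) (r : 'I_n -> int) (L : nat) (pi : {perm 'I_L})
    (v h : nat -> nat) (l : nat) (v' h' : nat -> nat) :
  gridding_matrix M -> pmm M c r -> has_cycle M ->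
  gridded_coil M c r pi v h l ->
  gridding M pi v' h' ->
  (forall (i : 'I_m) (j : 'I_n), (0 < cell_count pi v' h' i j)%N ->
     (cell_count pi v' h' i j <=
        2 * l * ((\sum_(i' : 'I_m | i' != i) cell_count pi v' h' i' j) + 1))%N) /\
  (forall (i : 'I_m) (j : 'I_n), (0 < cell_count pi v' h' i j)%N ->
     (cell_count pi v' h' i j <=
        2 * l * ((\sum_(j' : 'I_n | j' != j) cell_count pi v' h' i j') + 1))%N).
Proof.
(* [gridding_matrix M] is implied by [pmm M c r] on non-zero entries, and the cycle of G_M
   used is the one carried by the coil. *)
move=> _ pmmM _ [grid [lL [p [a [b [[p_gt1 [a_inj [b_inj _]]] [lE]]]]]]].
move=> [lab [lab_inj [lab_edge [_ [sigma [C1 [C2 [C3 C4]]]]]]]] grid'.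
pose w s := sigma (insubd (Ordinal lL) s).
have wE (s : 'I_L) : w s = sigma s by rewrite /w valKd.
have idxK q : w (sigma^-1 q)%g = q by rewrite wE permKV.
have l_gt2 : 2 < l by lia.
have coil_in_cell s : s < L -> in_cell pi v h (w s) (lab (s %% l)).1 (lab (s %% l)).2.
  by move=> sL; have := C1 (Ordinal sL); rewrite -wE.
have coil_next s : s.+1 < L -> arrow c r pi v h (w s) (w s.+1).
  by move=> sL; have := C2 (Ordinal (ltnW sL)) (Ordinal sL) erefl; rewrite -!wE.
have coil_back s : s + l.+1 < L -> arrow c r pi v h (w (s + l.+1)) (w s).
  move=> sL; have sL' : s < L by apply: leq_ltn_trans sL; apply: leq_addr.
  by have := C3 (Ordinal sL) (Ordinal sL') erefl; rewrite -!wE.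
have coil_back0 : arrow c r pi v h (w l) (w 0).
  by have := C4 (Ordinal lL) (Ordinal (leq_ltn_trans (leq0n l) lL)) erefl erefl; rewrite -!wE.
split=> i j _.
  exact: (cell_count_le_row pmmM grid a_inj b_inj l_gt2 lab_inj lab_edge
            coil_in_cell coil_next coil_back coil_back0 grid' idxK).
exact: (cell_count_le_col pmmM grid a_inj b_inj l_gt2 lab_inj lab_edge
          coil_in_cell coil_next coil_back coil_back0 grid' idxK).
Qed.
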